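(* For all integers $q\ge1$ and $n\ge1$, the number of nonattacking placements of $q$ unlabelled semibishops on the $n\times n$ square board is $$u_{\mathsf Q^{01}}(q;n)=(-1)^q\sum_{k=0}^q s(n+1,n+1-k)\,s(n,n-(q-k)),$$ which is a polynomial function of $n$ of degree $2q$.
   Context: The semibishop $\mathsf Q^{01}$ is the rider with the single basic move $(1,1)$: two pieces at positions $z,z'\in[n]^2=\{1,\dots,n\}^2$ attack each other if $z'-z$ is an integer multiple of $(1,1)$ (including $z=z'$). $u_{\mathsf Q^{01}}(q;n)$ counts the sets of $q$ positions in $[n]^2$ no two of which attack each other. $s(a,b)$ denotes the signed Stirling number of the first kind, taken to be $0$ if $b<0$ or $b>a$. *)

From mathcomp Require Import all_boot all_order all_algebra.
Set Implicit Arguments. Unset Strict Implicit. Unset Printing Implicit Defensive.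
Import Order.TTheory GRing.Theory Num.Theory.
Local Open Scope ring_scope.

Fixpoint stirling1 (a b : nat) {struct a} : int :=
  match a, b with
  | 0%N, 0%N => 1
  | 0%N, _.+1 => 0
  | _.+1, 0%N => 0
  | a'.+1, b'.+1 => stirling1 a' b' - (a'%:Z) * stirling1 a' b'.+1
  end.

Definition stirling1z (a : nat) (b : int) : int :=
  match b with
  | Posz b' => stirling1 a b'
  | Negz _ => 0
  end.

(* Board [n]^2, represented 0-indexed as 'I_n * 'I_n (a translation of
   {1..n}^2, which does not affect differences of positions). *)
Definition pos (n : nat) := ('I_n * 'I_n)%type.

(* Semibishop Q^{01}: z and z' attack each other iff z' - z is an integer
   multiple of (1,1), i.e. both coordinate differences equal the same t. *)
Definition semibishop_attack (n : nat) (z z' : pos n) : bool :=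
  ((z'.1 : nat)%:Z - (z.1 : nat)%:Z == (z'.2 : nat)%:Z - (z.2 : nat)%:Z).

Definition nonattacking (n : nat) (S : {set pos n}) : bool :=
  [forall z in S, forall z' in S, (z != z') ==> ~~ semibishop_attack z z'].

Definition u_semibishop (q n : nat) : nat :=
  #|[set S : {set pos n} | (#|S| == q) && nonattacking S]|.

From mathcomp Require Import all_boot all_order all_algebra zify ring.
Import Order.TTheory GRing.Theory Num.Theory.
Local Open Scope ring_scope.

(* Two semibishops attack each other iff they lie on the same diagonal
   {x - y = t}, so a nonattacking set is a set on which the diagonal map is
   injective.  Choosing at most one point on each diagonal, the nonattacking
   q-sets are counted by the coefficient of X^q in the product over all
   diagonals of (1 + length * X).  The diagonals of the n x n board have
   lengths 1, ..., n and 1, ..., n - 1, so this product is P(n+1) P(n) with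
   P(a) = prod_(i < a) (1 + i X), and [X^k] P(a) = (-1)^k s(a, a - k).
   Since [X^(k+1)] P(a) = sum_(i < a) i [X^k] P(i), induction on k shows that
   [X^k] P(a) is a polynomial in a of degree 2k with positive leading
   coefficient; positivity prevents cancellation in the convolution, which
   therefore has degree exactly 2q. *)

Lemma big_option (R : Type) (idx : R) (op : Monoid.law idx) (T : finType)
    (F : option T -> R) :
  \big[op/idx]_(o : option T) F o = op (F None) (\big[op/idx]_(t : T) F (Some t)).
Proof.
by rewrite ![index_enum _]unlock [@Finite.enum in LHS]unlock /= big_cons big_map.
Qed.

Section InjectiveSubsets.
Variables (T B : finType) (f : T -> B).

Definition lies_over (b : B) : pred (option T) :=
  fun o => if o is Some t then f t == b else true.

Definition section_of (S : {set T}) : {ffun B -> option T} :=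
  [ffun b => [pick t in S | f t == b]].

Definition section_set (g : {ffun B -> option T}) : {set T} :=
  [set t | g (f t) == Some t].

Definition section_size (g : {ffun B -> option T}) : nat :=
  #|[set b | g b != None]|.

Lemma section_of_family (S : {set T}) : section_of S \in family lies_over.
Proof. by apply/familyP => b; rewrite ffunE /lies_over; case: pickP => // t /andP[]. Qed.

Lemma section_ofK (S : {set T}) : dinjectiveb f S -> section_set (section_of S) = S.
Proof.
move/dinjectiveP => injf; apply/setP => t; rewrite inE ffunE.
case: pickP => [t' /andP[St' /eqP ft't] | /(_ t)]; last by rewrite eqxx andbT => ->.
by apply/eqP/idP => [[<-] // | St]; rewrite (injf _ _ St' St ft't).
Qed.

Lemma section_set_dinjective g : dinjectiveb f (section_set g).
Proof.
apply/dinjectiveP => t t'; rewrite !inE => /eqP gt /eqP gt' ftt'.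
by move: gt; rewrite ftt' gt' => -[].
Qed.

Lemma section_setK g : g \in family lies_over -> section_of (section_set g) = g.
Proof.
move/familyP => g_over; apply/ffunP => b; rewrite ffunE.
case: pickP => [t /andP[] | none_over_b]; first by rewrite inE => /eqP gt /eqP <-.
have := g_over b; rewrite /lies_over; case gb: (g b) => [t|] // /eqP ft.
by have := none_over_b t; rewrite inE ft gb !eqxx.
Qed.

Lemma card_section_set g : g \in family lies_over -> #|section_set g| = section_size g.
Proof.
move/familyP => g_over.
rewrite -(card_in_imset (f := f)); last exact/dinjectiveP/section_set_dinjective.
apply: eq_card => b; rewrite inE; apply/imsetP/idP => [[t] | ].
  by rewrite inE => /eqP gt ->; rewrite gt.
have := g_over b; rewrite /lies_over; case gb: (g b) => [t|] // /eqP ft _.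
by exists t; rewrite // inE ft gb.
Qed.

Lemma card_dinjective_subsets q :
  #|[set S : {set T} | (#|S| == q) && dinjectiveb f S]| =
  #|[set g in family lies_over | section_size g == q]|.
Proof.
rewrite -(card_in_imset (f := section_of)) => [|S1 S2]; last first.
  by rewrite !inE => /andP[_ /section_ofK {2}<-] /andP[_ /section_ofK {2}<-] ->.
apply: eq_card => g; rewrite inE; apply/imsetP/andP => [[S] | [g_over /eqP sg]].
  rewrite inE => /andP[/eqP <- injS] ->.
  by rewrite section_of_family -card_section_set ?section_of_family ?section_ofK.
exists (section_set g); last by rewrite section_setK.
by rewrite inE section_set_dinjective card_section_set // sg eqxx.
Qed.

Lemma coef_prod_fibres (R : comNzRingType) q :
  (\prod_(b : B) (1 + #|f @^-1: [set b]|%:R *: 'X) : {poly R})`_q =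
  #|[set S : {set T} | (#|S| == q) && dinjectiveb f S]|%:R.
Proof.
have fibre_sum b : 1 + #|f @^-1: [set b]|%:R *: 'X =
    \sum_(o | lies_over b o) 'X^(o != None) :> {poly R}.
  rewrite big_mkcond big_option /= expr0 -big_mkcond sumr_const scaler_nat.
  by congr (_ + 'X *+ _); apply: eq_card => t; rewrite !inE.
rewrite (eq_bigr _ (fun b _ => fibre_sum b)) bigA_distr_big_dep coef_sum.
under eq_bigr => g _ do rewrite prodrXr coefXn.
rewrite card_dinjective_subsets -sum1dep_card natr_sum [RHS]big_mkcond /=.
rewrite big_mkcond; apply: eq_bigr => g _; case: (g \in family lies_over) => //=.
by rewrite eq_sym /section_size -sum1dep_card [in RHS]big_mkcond; case: eqP.
Qed.

End InjectiveSubsets.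

Lemma card_ord_addr_eq n a b : #|[set y : 'I_n | a == y + b]%N| = (b <= a < n + b)%N.
Proof.
case: (boolP (b <= a < n + b)%N) => [/andP[le_ba lt_a] | out].
  have lt_ab : (a - b < n)%N by lia.
  rewrite (_ : [set y | _] = [set Ordinal lt_ab]) ?cards1 //.
  by apply/setP => y; rewrite !inE -val_eqE /=; apply/eqP/eqP; lia.
rewrite (_ : [set y | _] = set0) ?cards0 //; apply/setP => y; rewrite !inE.
by apply/negbTE/eqP => eq_a; move: out (ltn_ord y); rewrite eq_a; lia.
Qed.

Lemma sum_ord_interval n lo hi :
  (\sum_(x < n) (lo <= x < hi)%N)%N = (minn n hi - lo)%N.
Proof. by elim: n => [|n IH]; [rewrite big_ord0 | rewrite big_ord_recr /= IH]; lia. Qed.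

Lemma card_pairs {m n} (P : 'I_m -> 'I_n -> bool) :
  #|[set z : 'I_m * 'I_n | P z.1 z.2]| = (\sum_(x < m) #|[set y | P x y]|)%N.
Proof.
under eq_bigr do rewrite -sum1dep_card.
by rewrite pair_big_dep sum1dep_card.
Qed.

Lemma diagonal_subproof {n} (z : pos n) : (z.1 + n - z.2 < n + n)%N.
Proof. by have := ltn_ord z.1; lia. Qed.

(* The index z.1 - z.2 + n of the diagonal through z; index 0 is never hit. *)
Definition diagonal {n} (z : pos n) : 'I_(n + n) := Ordinal (diagonal_subproof z).

Lemma semibishop_attackE {n} (z z' : pos n) :
  semibishop_attack z z' = (diagonal z == diagonal z').
Proof.
rewrite /semibishop_attack -val_eqE /=.
by move: (ltn_ord z.2) (ltn_ord z'.2) => *; apply/eqP/eqP; lia.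
Qed.

Lemma nonattackingE n (S : {set pos n}) : nonattacking S = dinjectiveb (@diagonal n) S.
Proof.
apply/forall_inP/dinjectiveP => [nonatt z z' Sz Sz' | inj z Sz].
  move=> /eqP eq_zz'; apply/eqP; apply: contraTT eq_zz' => ne_zz'.
  by have /forall_inP/(_ z' Sz') := nonatt z Sz; rewrite ne_zz' semibishop_attackE.
apply/forall_inP => z' Sz'; apply/implyP => ne_zz'.
by rewrite semibishop_attackE; apply: contra ne_zz' => /eqP /inj ->.
Qed.

Lemma card_diagonal_fibre n (d : 'I_(n + n)) :
  #|@diagonal n @^-1: [set d]| = (minn n d - (d - n))%N.
Proof.
transitivity #|[set z : pos n | z.1 + n == z.2 + d]%N|.
  apply: eq_card => -[x y]; rewrite !inE -val_eqE /=.
  by move: (ltn_ord y) => lt_y; apply/eqP/eqP; lia.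
rewrite (card_pairs (fun x y => x + n == y + d)%N) -sum_ord_interval; apply: eq_bigr => x _.
by rewrite card_ord_addr_eq; move: (ltn_ord x) (ltn_ord d) => *; congr nat_of_bool; lia.
Qed.

Definition stirling_poly (a : nat) : {poly int} := \prod_(i < a) (1 + i%:R *: 'X).

Lemma prod_diagonal_fibres n :
  \prod_(d : 'I_(n + n)) (1 + #|@diagonal n @^-1: [set d]|%:R *: 'X) =
  stirling_poly n.+1 * stirling_poly n.
Proof.
rewrite big_split_ord mulrC /stirling_poly big_ord_recl scale0r addr0 mul1r.
congr (_ * _); [|rewrite (reindex_inj rev_ord_inj)]; apply: eq_bigr => i _;
  rewrite card_diagonal_fibre /=; congr (1 + _%:R *: _);
  by move: (ltn_ord i); rewrite /bump /=; lia.
Qed.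

Lemma u_semibishop_coef q n :
  (u_semibishop q n)%:Z = (stirling_poly n.+1 * stirling_poly n)`_q.
Proof.
rewrite -prod_diagonal_fibres coef_prod_fibres natz; congr Posz.
by apply: eq_card => S; rewrite !inE nonattackingE.
Qed.

Lemma stirling_polyS a :
  stirling_poly a.+1 = stirling_poly a + a%:R *: (stirling_poly a * 'X).
Proof. by rewrite /stirling_poly big_ord_recr /= mulrDr mulr1 -scalerAr. Qed.

Lemma coef_stirling_poly0 a : (stirling_poly a)`_0 = 1.
Proof.
elim: a => [|a IH]; first by rewrite /stirling_poly big_ord0 coef1.
by rewrite stirling_polyS coefD coefZ coefMX IH mulr0 addr0.
Qed.

Lemma coef_stirling_polyS a k :
  (stirling_poly a.+1)`_k.+1 = (stirling_poly a)`_k.+1 + a%:R * (stirling_poly a)`_k.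
Proof. by rewrite stirling_polyS coefD coefZ coefMX. Qed.

Lemma coef_stirling_poly_sum a k :
  (stirling_poly a)`_k.+1 = \sum_(i < a) i%:R * (stirling_poly i)`_k.
Proof.
elim: a => [|a IH]; first by rewrite /stirling_poly !big_ord0 coef1.
by rewrite coef_stirling_polyS big_ord_recr /= IH.
Qed.

Lemma stirling1_gt {a b} : (a < b)%N -> stirling1 a b = 0.
Proof. by elim: a b => [|a IH] [|b] //= lt_ab; rewrite !IH ?mulr0 ?subr0 //; lia. Qed.

Lemma stirling1zS a (b : int) :
  stirling1z a.+1 (b + 1) = stirling1z a b - a%:Z * stirling1z a (b + 1).
Proof.
case: b => [b|[|b]] /=; rewrite ?addn1 ?subnn ?mulr0 ?subr0 //.
by case: a => [|a] /=; rewrite ?mul0r ?mulr0 subr0.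
Qed.

Lemma stirling1z_coef a k :
  stirling1z a (a%:Z - k%:Z) = (-1) ^+ k * (stirling_poly a)`_k.
Proof.
elim: a k => [|a IH] [|k].
- by rewrite /stirling_poly big_ord0 coef1.
- by rewrite /stirling_poly big_ord0 coef1 mulr0.
- have := IH 0%N; rewrite !subr0 /= => ->.
  by rewrite (stirling1_gt (ltnSn a)) mulr0 subr0 !coef_stirling_poly0.
rewrite (_ : a.+1%:Z - k.+1%:Z = (a%:Z - k.+1%:Z) + 1); last by lia.
rewrite stirling1zS (_ : a%:Z - k.+1%:Z + 1 = a%:Z - k%:Z); last by lia.
by rewrite !IH coef_stirling_polyS exprS natz; ring.
Qed.

Section PolynomialFunctions.
Variable R : numFieldType.

Lemma coef_XaddC1_exp m j : (('X + 1) ^+ m : {poly R})`_j = 'C(m, j)%:R.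
Proof.
elim: m j => [|m IH] [|j]; rewrite ?expr0 ?coef1 // exprSr mulrDr mulr1 coefD coefMX //=.
  by rewrite IH add0r !bin0.
by rewrite !IH binS natrD addrC.
Qed.

Lemma antidifference (p : {poly R}) : exists P : {poly R},
  [/\ forall x, P.[x + 1] - P.[x] = p.[x], (size P <= (size p).+1)%N
    & P`_(size p) = lead_coef p / (size p)%:R].
Proof.
have [N] := ubnP (size p); elim: N p => // N IH p lt_pN.
have [-> | nz_p] := eqVneq p 0.
  by exists 0; rewrite size_poly0 lead_coef0 mul0r coef0; split=> // x; rewrite !horner0 subrr.
have [d size_p] : {d | size p = d.+1} by exists (size p).-1; rewrite prednK // size_poly_gt0.
set a := lead_coef p / d.+1%:R.
pose r := p - a *: (('X + 1) ^+ d.+1 - 'X^(d.+1)).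
have size_r : (size r <= d)%N.
  apply/leq_sizeP => j le_dj; rewrite coefB coefZ coefB coef_XaddC1_exp coefXn.
  have [-> | lt_dj] := eqVneq j d.
    by rewrite binSn (ltn_eqF (ltnSn d)) subr0 /a lead_coefE size_p divfK ?subrr ?pnatr_eq0.
  rewrite nth_default ?size_p; last by lia.
  have [-> | ne_jd1] := eqVneq j d.+1; first by rewrite binn subrr mulr0 subrr.
  by rewrite bin_small ?subrr ?mulr0 ?subrr //; lia.
have /IH[P' [diffP' size_P' _]] : (size r < N)%N by rewrite size_p in lt_pN; lia.
have size_P'd : (size P' <= d.+1)%N by rewrite (leq_trans size_P').
exists (P' + a *: 'X^(d.+1)); rewrite size_p; split.
- move=> x; have := diffP' x; rewrite /r !hornerE => diff.
  by rewrite -[p.[x]](subrK (a * ((x + 1) ^+ d.+1 - x ^+ d.+1))) -diff; ring.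
- apply: (leq_trans (size_polyD _ _)); rewrite geq_max (leq_trans size_P'd) //.
  by rewrite (leq_trans (size_scale_leq _ _)) // size_polyXn.
- by rewrite coefD coefZ coefXn eqxx mulr1 nth_default ?add0r.
Qed.

Definition pospoly_fun (d : nat) (u : nat -> R) : Prop :=
  exists P : {poly R}, [/\ size P = d.+1, 0 < lead_coef P & forall n, P.[n%:R] = u n].

Lemma pospoly_fun_ext {d u v} : u =1 v -> pospoly_fun d u -> pospoly_fun d v.
Proof. by move=> eq_uv [P [? ? Pu]]; exists P; split=> // n; rewrite Pu eq_uv. Qed.

Lemma size_lead_coef_gt0 (P : {poly R}) d :
  (size P <= d.+1)%N -> 0 < P`_d -> size P = d.+1 /\ 0 < lead_coef P.
Proof.
move=> le_Pd Pd_gt0; suff size_P : size P = d.+1 by rewrite lead_coefE size_P.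
apply/eqP; rewrite eqn_leq le_Pd ltnNge; apply: contraTN Pd_gt0 => le_P.
by rewrite nth_default // ltxx.
Qed.

Lemma pospoly_fun1 : pospoly_fun 0 (fun _ => 1).
Proof. by exists 1; rewrite size_poly1 lead_coef1; split=> // n; rewrite hornerC. Qed.

Lemma pospoly_fun_id : pospoly_fun 1 (fun n => n%:R).
Proof. by exists 'X; rewrite size_polyX lead_coefX; split=> // n; rewrite hornerX. Qed.

Lemma pospoly_fun_shift {d u} : pospoly_fun d u -> pospoly_fun d (fun n => u n.+1).
Proof.
move=> [P [size_P lead_P Pu]]; exists (P \Po ('X + 1%:P)).
rewrite size_comp_poly2 ?size_XaddC // lead_coef_comp ?size_XaddC //.
by rewrite lead_coefXaddC expr1n mulr1; split=> // n; rewrite horner_comp !hornerE natr1 Pu.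
Qed.

Lemma pospoly_funM {d e u v} :
  pospoly_fun d u -> pospoly_fun e v -> pospoly_fun (d + e) (fun n => u n * v n).
Proof.
move=> [P [size_P lead_P Pu]] [Q [size_Q lead_Q Qv]]; exists (P * Q).
have [nz_P nz_Q] : P != 0 /\ Q != 0 by rewrite -!size_poly_eq0 size_P size_Q.
split=> [|| n]; first by rewrite size_mul // size_P size_Q addSn addnS.
  by rewrite lead_coefM mulr_gt0.
by rewrite hornerM Pu Qv.
Qed.

Lemma pospoly_fun_sum {I : finType} (i0 : I) {d} {u : I -> nat -> R} :
  (forall i, pospoly_fun d (u i)) -> pospoly_fun d (fun n => \sum_i u i n).
Proof.
move=> /fin_all_exists[P /all_and3[size_P lead_P Pu]]; exists (\sum_i P i).
have coef_P i : (P i)`_d = lead_coef (P i) by rewrite lead_coefE size_P.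
have [size_sum lead_sum] : size (\sum_i P i) = d.+1 /\ 0 < lead_coef (\sum_i P i).
  apply: size_lead_coef_gt0.
    by apply: leq_trans (size_sum _ _ _) _; apply/bigmax_leqP => i _; rewrite size_P.
  rewrite coef_sum (bigD1 i0) //= coef_P ltr_wpDr //.
  by apply: sumr_ge0 => i _; rewrite coef_P ltW.
by split=> // n; rewrite horner_sum; apply: eq_bigr => i _; rewrite Pu.
Qed.

Lemma pospoly_fun_partial_sum {d u} :
  pospoly_fun d u -> pospoly_fun d.+1 (fun n => \sum_(i < n) u i).
Proof.
move=> [P [size_P lead_P Pu]]; have [Q [diffQ size_Q coefQ]] := antidifference P.
exists (Q - (Q.[0])%:P).
have [size_Q' lead_Q] : size Q = d.+2 /\ 0 < lead_coef Q.
  by apply: size_lead_coef_gt0; rewrite -size_P // coefQ divr_gt0 ?ltr0n ?size_P.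
have size_C : (size (- (Q.[0])%:P) < size Q)%N.
  by rewrite size_opp size_Q' (leq_ltn_trans (size_polyC_leq1 _)).
split; [by rewrite size_addl // size_Q' | by rewrite lead_coefDl |].
move=> n; rewrite !hornerE -[X in _ - Q.[X]]/(0%:R) -(telescope_sumr (fun k => Q.[k%:R])) //.
by rewrite big_mkord; apply: eq_bigr => i _; rewrite -Pu -diffQ natr1.
Qed.

Lemma pospoly_fun_coef_stirling k :
  pospoly_fun (2 * k) (fun a => ((stirling_poly a)`_k)%:~R).
Proof.
elim: k => [|k IH].
  by apply: pospoly_fun_ext pospoly_fun1 => a; rewrite coef_stirling_poly0.
rewrite (_ : 2 * k.+1 = (1 + 2 * k).+1)%N; last by lia.
apply: pospoly_fun_ext (pospoly_fun_partial_sum (pospoly_funM pospoly_fun_id IH)) => a.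
rewrite coef_stirling_poly_sum rmorph_sum.
by apply: eq_bigr => i _; rewrite rmorphM rmorph_nat.
Qed.

Lemma pospoly_fun_u_semibishop q :
  pospoly_fun (2 * q) (fun n => (u_semibishop q n)%:R).
Proof.
pose term (k : 'I_q.+1) n := ((stirling_poly n.+1)`_k * (stirling_poly n)`_(q - k))%:~R : R.
have term_pospoly k : pospoly_fun (2 * q) (term k).
  rewrite (_ : 2 * q = 2 * k + 2 * (q - k))%N; last by have := ltn_ord k; lia.
  apply: pospoly_fun_ext (pospoly_funM (pospoly_fun_shift (pospoly_fun_coef_stirling k))
                                        (pospoly_fun_coef_stirling (q - k))) => n.
  by rewrite /term rmorphM.
apply: pospoly_fun_ext (pospoly_fun_sum ord0 term_pospoly) => n.
by rewrite -[RHS]/((u_semibishop q n)%:Z%:~R) u_semibishop_coef coefM rmorph_sum.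
Qed.

End PolynomialFunctions.

Theorem theorem7p2 (q : nat) : (1 <= q)%N ->
  (forall n : nat, (1 <= n)%N ->
     (u_semibishop q n)%:Z =
     (-1) ^+ q * \sum_(k < q.+1)
        stirling1z n.+1 (n.+1%:Z - (k : nat)%:Z) *
        stirling1z n (n%:Z - (q - k)%N%:Z))
  /\
  (exists p : {poly rat}, size p = (2 * q).+1 /\
     forall n : nat, (1 <= n)%N -> p.[n%:R] = (u_semibishop q n)%:R).
Proof.
move=> _; split=> [n _ | ].
  rewrite u_semibishop_coef coefM big_distrr; apply: eq_bigr => k _ /=.
  have le_kq : (k <= q)%N := ltn_ord k.
  by rewrite !stirling1z_coef mulrACA -exprD subnKC // signrMK.
have [p [size_p _ p_u]] := pospoly_fun_u_semibishop rat q.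
by exists p; split=> // n _.
Qed.
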